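(* Let $A$ be an infinite set, $I$ a set, and $F$ a filter on the partition lattice $\Pi(I)$. Let $\theta$ be a congruence on the algebra $\Omega(A)^{F}$. Define $Z\subseteq\{\emptyset\}\cup\bigcup F$ by: $R\in Z$ if and only if for all $f,g\in\Omega(A)^{F}$ with $f|_{R}=g|_{R}$ we have $(f,g)\in\theta$. Then $Z$ is a filter on the Boolean algebra $\{\emptyset\}\cup\bigcup F$, and for all $f,g\in\Omega(A)^{F}$ we have $(f,g)\in\theta$ if and only if $\{i\in I: f(i)=g(i)\}\in Z$.
   Context: For each $a\in A$ let $\hat{a}$ be a constant symbol, and for each $n\geq1$ and each $f:A^{n}\to A$ let $\hat{f}$ be an $n$-ary operation symbol. $\Omega(A)$ is the algebra with universe $A$ in which $\hat{a}$ is interpreted as $a$ and $\hat{f}$ as $f$. $\Pi(I)$ is the lattice of partitions of $I$ (with nonempty blocks), where $P\preceq Q$ means $P$ refines $Q$ and $P\wedge Q$ is the common refinement; a filter $F$ on $\Pi(I)$ is a nonempty set closed under $\wedge$ and upward closed under coarsening. For $f:I\to X$, $\Pi(f)=\{f^{-1}(\{x\}):x\in X\}\setminus\{\emptyset\}$. $\Omega(A)^{F}$ denotes the subalgebra $\{f\in A^{I}:\Pi(f)\in F\}$ of $\Omega(A)^{I}$. $\bigcup F$ denotes the set of all blocks of all partitions in $F$; the set $\{\emptyset\}\cup\bigcup F$ is a Boolean algebra of subsets of $I$ under the set operations. *)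

From mathcomp Require Import all_boot.
From mathcomp Require Import boolp classical_sets cardinality.
Set Implicit Arguments. Unset Strict Implicit. Unset Printing Implicit Defensive.
Local Open Scope classical_set_scope.

Definition is_partition (I : Type) (P : set (set I)) : Prop :=
  (forall B, P B -> B !=set0) /\
  (forall B C, P B -> P C -> B `&` C !=set0 -> B = C) /\
  (forall i : I, exists2 B, P B & B i).

Definition refines (I : Type) (P Q : set (set I)) : Prop :=
  forall B, P B -> exists2 C, Q C & B `<=` C.

Definition pmeet (I : Type) (P Q : set (set I)) : set (set I) :=
  [set C | exists B, exists D, [/\ P B, Q D, C = B `&` D & C !=set0]].

Definition Pi (I X : Type) (f : I -> X) : set (set I) :=
  [set B | (exists x : X, B = f @^-1` [set x]) /\ B !=set0].

Definition partition_filter (I : Type) (F : set (set (set I))) : Prop :=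
  [/\ (forall P, F P -> is_partition P),
      F !=set0,
      (forall P Q, F P -> F Q -> F (pmeet P Q)) &
      (forall P Q, F P -> is_partition Q -> refines P Q -> F Q)].

Definition OmegaF (I A : Type) (F : set (set (set I))) : set (I -> A) :=
  [set f | F (Pi f)].

(* A congruence on Omega(A)^F: an equivalence relation on the universe
   compatible with every operation hat g, g : A^n -> A, n >= 1, acting
   pointwise (constants impose no condition). n-ary operations are
   functions ('I_n.+1 -> A) -> A. *)
Definition is_congruence (I A : Type) (F : set (set (set I)))
    (theta : (I -> A) -> (I -> A) -> Prop) : Prop :=
  [/\ (forall f g, theta f g -> OmegaF F f /\ OmegaF F g),
      (forall f, OmegaF F f -> theta f f),
      (forall f g, theta f g -> theta g f),
      (forall f g h, theta f g -> theta g h -> theta f h) &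
      (forall (n : nat) (op : ('I_n.+1 -> A) -> A)
              (fs gs : 'I_n.+1 -> I -> A),
          (forall k, theta (fs k) (gs k)) ->
          theta (fun i => op (fun k => fs k i)) (fun i => op (fun k => gs k i)))].

Definition blockBA (I : Type) (F : set (set (set I))) : set (set I) :=
  [set set0] `|` \bigcup_(P in F) P.

Definition Zfam (I A : Type) (F : set (set (set I)))
    (theta : (I -> A) -> (I -> A) -> Prop) : set (set I) :=
  [set R | blockBA F R /\
     (forall f g : I -> A, OmegaF F f -> OmegaF F g ->
        (forall i, R i -> f i = g i) -> theta f g)].

Definition BA_filter (I : Type) (B Z : set (set I)) : Prop :=
  [/\ Z `<=` B,
      Z !=set0,
      (forall R S, Z R -> Z S -> Z (R `&` S)) &
      (forall R S, Z R -> B S -> R `<=` S -> Z S)].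

(** Call a map [k : I -> X] F-constant when it is constant on the blocks of some
    partition in F.  The F-constant maps are closed under pairing and
    post-composition, [Omega(A)^F] consists of the F-constant maps, and the
    elements of [{emptyset} U (U F)] are exactly the sets with F-constant
    indicator.  Hence the equalizer of two elements of [Omega(A)^F] lies in the
    Boolean algebra, and gluing [f] on [R] with [g] off [R] stays in
    [Omega(A)^F], which gives closure of Z under intersection.  Finally the
    4-ary operation [(x0, x1, x2, x3) |-> if x0 = x1 then x3 else x2] shows that
    [(f, g) in theta] forces every pair agreeing on [{f = g}] into [theta]. *)
From mathcomp Require Import all_boot.
From mathcomp Require Import boolp classical_sets cardinality.
Local Open Scope classical_set_scope.
Set Implicit Arguments. Unset Strict Implicit.

Definition constant_on_blocks (I X : Type) (P : set (set I)) (k : I -> X) :=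
  forall B, P B -> forall x y, B x -> B y -> k x = k y.

Definition F_constant (I X : Type) (F : set (set (set I))) (k : I -> X) :=
  exists2 P, F P & constant_on_blocks P k.

Lemma Pi_partition (I X : Type) (k : I -> X) : is_partition (Pi k).
Proof.
split; first by move=> B [].
split=> [B C [[a ->] _] [[c ->] _] [x [/= <- <-]] //|i].
by exists (k @^-1` [set k i]) => //; split; [exists (k i) | exists i].
Qed.

Lemma constant_on_Pi (I X : Type) (k : I -> X) : constant_on_blocks (Pi k) k.
Proof. by move=> B [[a ->] _] x y /= -> ->. Qed.

Lemma constant_on_pmeet (I X Y : Type) (P Q : set (set I)) (k : I -> X) (l : I -> Y) :
  constant_on_blocks P k -> constant_on_blocks Q l ->
  constant_on_blocks (pmeet P Q) (fun i => (k i, l i)).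
Proof.
move=> kP lQ C [B [D [PB QD -> _]]] x y [Bx Dx] [By Dy].
by rewrite (kP B PB x y) // (lQ D QD x y).
Qed.

Section PartitionFilter.

Variables (I : Type) (F : set (set (set I))).
Hypothesis FF : partition_filter F.

Lemma Pi_in_filter (X : Type) (P : set (set I)) (k : I -> X) :
  F P -> constant_on_blocks P k -> F (Pi k).
Proof.
case: FF => Fpart _ _ Fup FP kP; apply: (Fup P) => //; first exact: Pi_partition.
move=> B PB; have [b Bb] := (Fpart P FP).1 B PB.
exists (k @^-1` [set k b]); first by split; [exists (k b) | exists b].
by move=> y By; rewrite /= (kP B PB y b).
Qed.

Lemma OmegaFP (X : Type) (f : I -> X) : OmegaF F f <-> F_constant F f.
Proof.
split=> [Ff|[P FP fP]]; last exact: Pi_in_filter FP fP.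
by exists (Pi f) => //; exact: constant_on_Pi.
Qed.

Lemma F_constant_pair (X Y : Type) (k : I -> X) (l : I -> Y) :
  F_constant F k -> F_constant F l -> F_constant F (fun i => (k i, l i)).
Proof.
case: FF => _ _ Fmeet _ [P FP kP] [Q FQ lQ].
by exists (pmeet P Q); [exact: Fmeet | exact: constant_on_pmeet].
Qed.

Lemma F_constant_comp (X Y : Type) (g : X -> Y) (k : I -> X) :
  F_constant F k -> F_constant F (g \o k).
Proof. by move=> [P FP kP]; exists P => // B PB x y Bx By /=; rewrite (kP B PB x y). Qed.

Lemma blockBAP (S : set I) : blockBA F S <-> F_constant F (fun i => `[< S i >]).
Proof.
case: FF => Fpart [P0 FP0] _ _; split.
  case=> [->|[P FP PS]]; first by exists P0 => // B _ x y _ _; rewrite !asboolF.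
  exists P => // B PB x y Bx By.
  have SB z : B z -> S z -> S = B.
    by move=> Bz Sz; apply: (Fpart P FP).2.1 => //; exists z.
  apply/idP/idP => /asboolP Sz; apply/asboolP; first by rewrite (SB x).
  by rewrite (SB y).
move=> /OmegaFP FS; have [->|/set0P [i Si]] := eqVneq S set0; first by left.
right; exists (Pi (fun i => `[< S i >])) => //; split; last by exists i.
by exists true; apply/seteqP; split=> x /= /asboolP.
Qed.

Lemma blockBA_setT : blockBA F [set: I].
Proof.
apply/blockBAP; case: FF => _ [P FP] _ _.
by exists P => // B _ x y _ _; rewrite !asboolT.
Qed.

Lemma blockBA_setI (R S : set I) : blockBA F R -> blockBA F S -> blockBA F (R `&` S).
Proof.
move=> /blockBAP FR /blockBAP FS; apply/blockBAP.
have := F_constant_comp (fun p : bool * bool => p.1 && p.2) (F_constant_pair FR FS).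
by congr F_constant; apply: funext => i; rewrite asbool_and.
Qed.

Lemma equalizer_in_blockBA (X : Type) (f g : I -> X) :
  OmegaF F f -> OmegaF F g -> blockBA F [set i | f i = g i].
Proof.
move=> /OmegaFP Ff /OmegaFP Fg; apply/blockBAP.
exact: (F_constant_comp (fun p : X * X => `[< p.1 = p.2 >]) (F_constant_pair Ff Fg)).
Qed.

Lemma glue_in_OmegaF (X : Type) (R : set I) (f g : I -> X) :
  blockBA F R -> OmegaF F f -> OmegaF F g ->
  OmegaF F (fun i => if `[< R i >] then f i else g i).
Proof.
move=> /blockBAP FR /OmegaFP Ff /OmegaFP Fg; apply/OmegaFP.
exact: (F_constant_comp (fun p : X * X * bool => if p.2 then p.1.1 else p.1.2)
          (F_constant_pair (F_constant_pair Ff Fg) FR)).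
Qed.

End PartitionFilter.

Section Congruence.

Variables (I A : Type) (F : set (set (set I))) (theta : (I -> A) -> (I -> A) -> Prop).
Hypothesis FF : partition_filter F.
Hypothesis theta_cong : is_congruence F theta.

Lemma congruence_eq (f g : I -> A) :
  OmegaF F f -> (forall i, f i = g i) -> theta f g.
Proof. by case: theta_cong => _ refl _ _ _ Ff /funext <-; exact: refl. Qed.

Lemma congruence_equalizer (f g f' g' : I -> A) :
  theta f g -> OmegaF F f' -> OmegaF F g' ->
  (forall i, f i = g i -> f' i = g' i) -> theta f' g'.
Proof.
case: theta_cong => dom refl _ _ op_compat tfg Ff' Fg' agree.
pose op (x : 'I_4 -> A) :=
  if `[< x ord0 = x (inord 1) >] then x (inord 3) else x (inord 2).
pose args (h0 : I -> A) (k : 'I_4) := nth h0 [:: h0; g; f'; g'] k.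
have := op_compat 3 op (args f) (args g).
rewrite /op /args !inordK //=.
have -> : (fun i => if `[< f i = g i >] then g' i else f' i) = f'.
  by apply: funext => i; case: asboolP => // /agree ->.
have -> : (fun i => if `[< g i = g i >] then g' i else f' i) = g'.
  by apply: funext => i; rewrite asboolT.
apply; case=> -[|[|[|[|//]]]] ?; rewrite /args /=; [exact: tfg | | |];
  apply: refl => //; exact: (dom _ _ tfg).2.
Qed.

Lemma Zfam_setI (R S : set I) :
  Zfam F theta R -> Zfam F theta S -> Zfam F theta (R `&` S).
Proof.
case: theta_cong => _ _ _ trans _ [BR ZR] [BS ZS].
split=> [|f g Ff Fg agree]; first exact: blockBA_setI.
pose h i := if `[< R i >] then f i else g i.
have Fh : OmegaF F h by exact: glue_in_OmegaF.
apply: (trans _ h).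
  by apply: ZR => // i Ri; rewrite /h asboolT.
by apply: ZS => // i Si; rewrite /h; case: asboolP => // Ri; apply: agree.
Qed.

End Congruence.

Theorem mainTheorem2 (A I : Type) (F : set (set (set I)))
    (theta : (I -> A) -> (I -> A) -> Prop) :
  infinite_set [set: A] ->
  partition_filter F ->
  is_congruence F theta ->
  BA_filter (blockBA F) (Zfam F theta) /\
  (forall f g : I -> A, OmegaF F f -> OmegaF F g ->
     (theta f g <-> Zfam F theta [set i | f i = g i])).
Proof.
move=> _ FF cong.
split; last first.
  move=> f g Ff Fg; split=> [tfg|[_]]; last exact.
  split; first exact: equalizer_in_blockBA.
  by move=> f' g' Ff' Fg'; exact: congruence_equalizer tfg Ff' Fg'.
split=> [R [] //||R S|R S [BR ZR] BS RS]; [|exact: Zfam_setI|].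
- exists setT; split=> [|f g Ff _ agree]; first exact: blockBA_setT.
  by apply: (congruence_eq cong Ff) => i; exact: agree.
- by split=> // f g Ff Fg agree; apply: ZR => // i /RS; exact: agree.
Qed.
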